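(* Let $f_0,f_1\in \mathrm{PL}_0(\mathbf{I})$ satisfy $[f_1^{f_0},f_0f_1^{-1}]=1$ and $[f_0f_1^{-1},f_1^{f_0^2}]=1$. If $A$ is an orbital of $f_0$, then either there exists an orbital $B$ of $f_1$ with $B\subseteq A$, or $A$ is disjoint from $\operatorname{Supp}(f_1)$.
   Context: $\mathrm{PL}_0(\mathbf{I})$ is the group of orientation-preserving piecewise-linear homeomorphisms of $[0,1]$ with finitely many points of non-differentiability. Functions act on the right: $tf=f(t)$, $fg=g\circ f$, $a^b=b^{-1}ab$, $[a,b]=aba^{-1}b^{-1}$. The orbitals of $f$ are the connected components (open intervals) of $\operatorname{Supp}(f)=\{x: xf\ne x\}$. *)

From Stdlib Require Import Reals.
Open Scope R_scope.

Definition inI (t : R) : Prop := 0 <= t <= 1.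

(* PL_0(I): orientation-preserving PL homeomorphisms of [0,1] with finitely
   many breakpoints.  A function R -> R represents such an element; only its
   values on [0,1] matter.  f fixes 0 and 1, is strictly increasing on [0,1],
   and [0,1] is cut by finitely many points 0 = x_0 < ... < x_n = 1 such that
   f is affine on each closed piece [x_i, x_{i+1}] (hence continuous). *)
Definition PL0 (f : R -> R) : Prop :=
  f 0 = 0 /\ f 1 = 1 /\
  (forall s t, inI s -> inI t -> s < t -> f s < f t) /\
  exists (n : nat) (x : nat -> R),
    x O = 0 /\ x n = 1 /\
    (forall i, (i < n)%nat -> x i < x (S i)) /\
    (forall i, (i < n)%nat -> exists m c : R,
        forall t, x i <= t <= x (S i) -> f t = m * t + c).

Definition is_inv (f g : R -> R) : Prop :=
  PL0 g /\ forall t, inI t -> g (f t) = t /\ f (g t) = t.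

(* Right actions: t (f g) = g (f t). *)
Definition mul (f g : R -> R) : R -> R := fun t => g (f t).

(* a^b = b^{-1} a b, given binv = b^{-1}. *)
Definition conjg (a b binv : R -> R) : R -> R := mul (mul binv a) b.

(* [a,b] = a b a^{-1} b^{-1}, given ainv = a^{-1}, binv = b^{-1}. *)
Definition comm (a ainv b binv : R -> R) : R -> R :=
  mul (mul (mul a b) ainv) binv.

Definition is_id (h : R -> R) : Prop := forall t, inI t -> h t = t.

Definition Supp (f : R -> R) (x : R) : Prop := inI x /\ f x <> x.

(* Connected subsets of R are exactly the intervals. *)
Definition is_interval (A : R -> Prop) : Prop :=
  forall x y z, A x -> A y -> x <= z <= y -> A z.

(* An orbital of f: a connected component of Supp(f), i.e. a nonempty
   connected subset of Supp(f) containing every connected subset of Supp(f)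
   that meets it. *)
Definition orbital (f : R -> R) (A : R -> Prop) : Prop :=
  (exists x, A x) /\
  (forall x, A x -> Supp f x) /\
  is_interval A /\
  (forall B : R -> Prop, is_interval B -> (forall x, B x -> Supp f x) ->
     (exists x, B x /\ A x) -> forall x, B x -> A x).

(* Write h = f0 f1^-1, c1 = f1^f0 and c2 = f1^(f0^2); the hypotheses say that h commutes
   with c1 and c2.  If the f1-orbital J of a point x of an f0-orbital A left A, it would
   contain a fixed point e of f0.

   For PL homeomorphisms k and g of I that commute, g is the identity on every component
   of Supp k on which it has a fixed point: powers of k carry the fixed points of g
   towards an end of the component, where g is affine.  Likewise two maps commuting
   with k that agree near an end of such a component agree on all of it.

   Hence the components at e of Supp h, Supp c1 and Supp c2 all equal J, so J is
   invariant under f0 and its right end L is fixed by f0 and f1.  Near L all maps are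
   affine, so c1 and c2 = c1^f0 have the same germ there; as both commute with h they
   agree on J, i.e. f0 commutes with c1 on J.  Since f0 fixes e, f0 is the identity on J,
   contradicting x in A. *)

From Stdlib Require Import Reals Lra Lia Classical FunctionalExtensionality PropExtensionality.
Open Scope R_scope.

Definition increasing_I (f : R -> R) : Prop :=
  forall s t, inI s -> inI t -> s < t -> f s < f t.

Definition maps_I (f : R -> R) : Prop := forall t, inI t -> inI (f t).

Definition incr_bij (f fi : R -> R) : Prop :=
  increasing_I f /\ increasing_I fi /\ maps_I f /\ maps_I fi /\
  forall t, inI t -> fi (f t) = t /\ f (fi t) = t.

Definition left_affine (f : R -> R) : Prop :=
  forall q, 0 < q <= 1 -> exists d m c, 0 < d <= q /\
    forall t, q - d <= t <= q -> f t = m * t + c.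

Lemma increasing_I_le f s t : increasing_I f -> inI s -> inI t -> s <= t -> f s <= f t.
Proof. intros Mf Is It [Hlt | ->]; [left; apply Mf | right]; auto. Qed.

Lemma increasing_I_inj f s t : increasing_I f -> inI s -> inI t -> f s = f t -> s = t.
Proof.
  intros Mf Is It E.
  destruct (total_order_T s t) as [[Hlt | Heq] | Hgt]; auto;
    [pose proof (Mf s t Is It Hlt) | pose proof (Mf t s It Is Hgt)]; lra.
Qed.

Lemma PL0_increasing_I f : PL0 f -> increasing_I f.
Proof. intros (_ & _ & Mf & _). exact Mf. Qed.

Lemma PL0_maps_I f : PL0 f -> maps_I f.
Proof.
  intros P t It. pose proof (PL0_increasing_I f P) as Mf. destruct P as (E0 & E1 & _).
  assert (I0 : inI 0) by (unfold inI; lra). assert (I1 : inI 1) by (unfold inI; lra).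
  pose proof (increasing_I_le f 0 t Mf I0 It (proj1 It)).
  pose proof (increasing_I_le f t 1 Mf It I1 (proj2 It)). unfold inI; lra.
Qed.

Lemma breakpoint_piece (x : nat -> R) n q : x O = 0 ->
  (forall i, (i < n)%nat -> x i < x (S i)) -> 0 < q <= x n ->
  exists i, (i < n)%nat /\ 0 <= x i /\ x i < q <= x (S i).
Proof.
  intros X0 Xinc Hq.
  assert (H : forall k, (k <= n)%nat -> 0 <= x k /\
            (q <= x k -> exists i, (i < k)%nat /\ 0 <= x i /\ x i < q <= x (S i))).
  { induction k as [|k IH]; intros Hk.
    - rewrite X0. split; [lra | intros; lra].
    - destruct (IH ltac:(lia)) as [Hpos Hex]. assert (x k < x (S k)) by (apply Xinc; lia).
      split; [lra|]. intros Hqk. destruct (Rle_dec q (x k)) as [Hle | Hgt].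
      + destruct (Hex Hle) as (i & Hi & Hx). exists i. split; [lia | exact Hx].
      + exists k. split; [lia | lra]. }
  apply (H n (le_n n)). lra.
Qed.

Lemma PL0_left_affine f : PL0 f -> left_affine f.
Proof.
  intros (_ & _ & _ & n & x & X0 & Xn & Xinc & Xaff) q Hq.
  destruct (breakpoint_piece x n q X0 Xinc ltac:(lra)) as (i & Hi & Hx).
  destruct (Xaff i Hi) as (m & c & E).
  exists (q - x i), m, c. split; [lra|]. intros t Ht. apply E. lra.
Qed.

Lemma PL0_incr_bij f g : PL0 f -> is_inv f g -> incr_bij f g.
Proof.
  intros Pf [Pg Inv].
  split; [|split; [|split; [|split]]];
    auto using PL0_increasing_I, PL0_maps_I.
Qed.

Lemma incr_bij_sym f fi : incr_bij f fi -> incr_bij fi f.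
Proof.
  intros (Mf & Mfi & If & Ifi & Inv). split; [|split; [|split; [|split]]]; auto.
  intros t It. split; apply Inv, It.
Qed.

Lemma incr_bij_mul f fi g gi : incr_bij f fi -> incr_bij g gi -> incr_bij (mul f g) (mul gi fi).
Proof.
  intros (Mf & Mfi & If & Ifi & Invf) (Mg & Mgi & Ig & Igi & Invg). unfold mul.
  split; [|split; [|split; [|split]]].
  - intros s t Is It H. apply Mg; auto.
  - intros s t Is It H. apply Mfi; auto.
  - intros t It. auto.
  - intros t It. auto.
  - intros t It. split.
    + rewrite (proj1 (Invg (f t) (If t It))). apply Invf, It.
    + rewrite (proj2 (Invf (gi t) (Igi t It))). apply Invg, It.
Qed.

Lemma incr_bij_conj a ai b bi :
  incr_bij a ai -> incr_bij b bi -> incr_bij (conjg a b bi) (conjg ai b bi).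
Proof.
  intros Ba Bb. exact (incr_bij_mul _ _ _ _ (incr_bij_mul _ _ _ _ (incr_bij_sym _ _ Bb) Ba) Bb).
Qed.

Lemma commute_of_comm_id a ai b bi : incr_bij a ai -> incr_bij b bi ->
  is_id (comm a ai b bi) -> forall t, inI t -> b (a t) = a (b t).
Proof.
  intros (_ & _ & Ia & Iai & Inva) (_ & _ & Ib & _ & Invb) H t It.
  assert (E : ai (b (a t)) = b t).
  { rewrite <- (H t It) at 2. unfold comm, mul. symmetry. apply Invb. auto. }
  rewrite <- E. symmetry. apply Inva. auto.
Qed.

Lemma affine_piece_mul f g q d1 d2 m1 c1 m2 c2 : 0 < m1 ->
  (forall t, q - d1 <= t <= q -> f t = m1 * t + c1) ->
  (forall t, f q - d2 <= t <= f q -> g t = m2 * t + c2) ->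
  forall t, q - Rmin d1 (d2 / m1) <= t <= q -> mul f g t = m2 * m1 * t + (m2 * c1 + c2).
Proof.
  intros Hm Ef Eg t Ht. unfold mul.
  pose proof (Rmin_l d1 (d2 / m1)). pose proof (Rmin_r d1 (d2 / m1)).
  assert (Hd : m1 * (q - t) <= d2).
  { replace d2 with (m1 * (d2 / m1)) by (field; lra). apply Rmult_le_compat_l; lra. }
  assert (Efq : f q = m1 * q + c1) by (apply Ef; lra).
  rewrite (Ef t) by lra. rewrite Eg; [ring|]. rewrite Efq. nra.
Qed.

Lemma left_affine_mul f fi g : incr_bij f fi -> left_affine f -> left_affine g ->
  left_affine (mul f g).
Proof.
  intros (Mf & _ & If & _) Af Ag q Hq.
  destruct (Af q Hq) as (d1 & m1 & c1 & Hd1 & Ef).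
  assert (Iq : inI q) by (unfold inI; lra). assert (I0 : inI 0) by (unfold inI; lra).
  assert (Hm1 : 0 < m1).
  { assert (Hlt : f (q - d1) < f q) by (apply Mf; unfold inI; lra).
    rewrite !Ef in Hlt by lra. nra. }
  assert (Hfq : 0 < f q <= 1).
  { pose proof (Mf 0 q I0 Iq (proj1 Hq)). pose proof (If 0 I0). pose proof (If q Iq).
    unfold inI in *. lra. }
  destruct (Ag (f q) Hfq) as (d2 & m2 & c2 & Hd2 & Eg).
  exists (Rmin d1 (d2 / m1)), (m2 * m1), (m2 * c1 + c2). split.
  - split; [apply Rmin_glb_lt; [lra | apply Rdiv_lt_0_compat; lra]|].
    pose proof (Rmin_l d1 (d2 / m1)). lra.
  - exact (affine_piece_mul f g q d1 d2 m1 c1 m2 c2 Hm1 Ef Eg).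
Qed.

Definition fixed_germ (f : R -> R) (L s : R) : Prop :=
  exists d, 0 < d /\ forall t, L - d <= t <= L -> f t = L + s * (t - L).

Lemma fixed_germ_of_left_affine f L : increasing_I f -> left_affine f -> 0 < L <= 1 ->
  f L = L -> exists s, 0 < s /\ fixed_germ f L s.
Proof.
  intros Mf Af HL fL. destruct (Af L HL) as (d & m & c & Hd & E).
  assert (Hlt : f (L - d) < f L) by (apply Mf; unfold inI; lra).
  rewrite (E L) in fL by lra. rewrite !E in Hlt by lra.
  exists m. split; [nra|]. exists d. split; [lra|]. intros t Ht. rewrite E by lra. nra.
Qed.

Lemma fixed_germ_mul f g L s r : 0 < s -> fixed_germ f L s -> fixed_germ g L r ->
  fixed_germ (mul f g) L (s * r).
Proof.
  intros Hs (d1 & Hd1 & Ef) (d2 & Hd2 & Eg).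
  assert (fL : f L = L) by (rewrite Ef by lra; ring).
  exists (Rmin d1 (d2 / s)). split; [apply Rmin_glb_lt; [lra | apply Rdiv_lt_0_compat; lra]|].
  intros t Ht.
  rewrite (affine_piece_mul f g L d1 d2 s (L - s * L) r (L - r * L) Hs); [ring | | | exact Ht].
  - intros u Hu. rewrite Ef by lra. ring.
  - intros u Hu. rewrite fL in Hu. rewrite Eg by lra. ring.
Qed.

Lemma fixed_germ_ext_I f g L s : 0 < L <= 1 -> (forall t, inI t -> f t = g t) ->
  fixed_germ f L s -> fixed_germ g L s.
Proof.
  intros HL Efg (d & Hd & E). exists (Rmin d L). split; [apply Rmin_glb_lt; lra|].
  pose proof (Rmin_l d L). pose proof (Rmin_r d L).
  intros t Ht. rewrite <- Efg by (unfold inI; lra). apply E. lra.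
Qed.

Lemma fixed_germ_slope_unique f L s r : fixed_germ f L s -> fixed_germ f L r -> s = r.
Proof.
  intros (d1 & Hd1 & E1) (d2 & Hd2 & E2).
  pose proof (Rmin_l d1 d2). pose proof (Rmin_r d1 d2).
  assert (Hm : 0 < Rmin d1 d2) by (apply Rmin_glb_lt; lra).
  pose proof (E1 (L - Rmin d1 d2) ltac:(lra)) as H1.
  rewrite (E2 (L - Rmin d1 d2)) in H1 by lra.
  apply (Rmult_eq_reg_r (- Rmin d1 d2)); lra.
Qed.

Lemma fixed_germ_agree f g L s : fixed_germ f L s -> fixed_germ g L s ->
  exists d, 0 < d /\ forall t, L - d < t < L -> f t = g t.
Proof.
  intros (d1 & Hd1 & E1) (d2 & Hd2 & E2). exists (Rmin d1 d2).
  split; [apply Rmin_glb_lt; lra|].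
  pose proof (Rmin_l d1 d2). pose proof (Rmin_r d1 d2).
  intros t Ht. rewrite E1, E2 by lra. reflexivity.
Qed.

Definition supp_comp (f : R -> R) (e y : R) : Prop :=
  forall z, (e <= z <= y \/ y <= z <= e) -> Supp f z.

Lemma supp_comp_between f e y t :
  supp_comp f e y -> (e <= t <= y \/ y <= t <= e) -> supp_comp f e t.
Proof. intros C Ht z Hz. apply C. lra. Qed.

Lemma supp_comp_refl f e : Supp f e -> supp_comp f e e.
Proof. intros S z Hz. replace z with e by lra. exact S. Qed.

Lemma supp_comp_supp f e y : supp_comp f e y -> Supp f y.
Proof. intros C. apply C. lra. Qed.

Lemma supp_comp_inI f e y : supp_comp f e y -> inI y.
Proof. intros C. apply (supp_comp_supp f e y C). Qed.

Lemma supp_comp_sym f e y : supp_comp f e y -> supp_comp f y e.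
Proof. intros C z Hz. apply C. lra. Qed.

Lemma supp_comp_orbital f e : Supp f e -> orbital f (supp_comp f e).
Proof.
  intros S. split; [|split; [|split]].
  - exists e. apply supp_comp_refl, S.
  - intros y C. exact (supp_comp_supp f e y C).
  - intros a b z Ca Cb Hz w Hw. destruct (Rle_dec w e); [apply Ca | apply Cb]; lra.
  - intros B IB SB (b0 & Bb0 & Cb0) y By w Hw.
    destruct (classic (e <= w <= b0 \/ b0 <= w <= e)) as [Hin | Hout]; [apply Cb0, Hin|].
    apply SB. destruct (Rle_dec b0 y); [apply (IB b0 y) | apply (IB y b0)]; auto; lra.
Qed.

Lemma orbital_exit_fixed f A x y : orbital f A -> A x -> inI y -> ~ A y ->
  exists z, (x <= z <= y \/ y <= z <= x) /\ inI z /\ f z = z.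
Proof.
  intros (_ & SA & _ & Max) Ax Iy Ny. apply NNPP. intros N. apply Ny.
  pose proof (proj1 (SA x Ax)) as Ix.
  apply (Max (fun z => x <= z <= y \/ y <= z <= x)); [| | exists x; split; [lra | exact Ax] | lra].
  - intros a b z Ha Hb Hz. lra.
  - intros z Hz. assert (Iz : inI z) by (unfold inI in *; lra).
    split; [exact Iz|]. intros E. apply N. exists z. auto.
Qed.

Lemma supp_comp_sub k g e : (forall w, supp_comp k e w -> g w <> w) ->
  forall t, supp_comp k e t -> supp_comp g e t.
Proof.
  intros N t C z Hz. assert (Cz : supp_comp k e z) by (apply (supp_comp_between k e t); auto).
  split; [exact (supp_comp_inI k e z Cz) | exact (N z Cz)].
Qed.

Lemma Supp_inv k ki : incr_bij k ki -> Supp ki = Supp k.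
Proof.
  intros (_ & _ & _ & _ & Inv). apply functional_extensionality. intros y.
  apply propositional_extensionality. unfold Supp.
  split; intros [Iy N]; split; auto; intros E; apply N; rewrite <- E at 1; apply Inv, Iy.
Qed.

Lemma supp_comp_inv k ki e : incr_bij k ki -> supp_comp ki e = supp_comp k e.
Proof. intros B. unfold supp_comp. rewrite (Supp_inv k ki B). reflexivity. Qed.

Lemma supp_comp_app k ki e t : incr_bij k ki -> supp_comp k e t -> supp_comp k e (k t).
Proof.
  intros (Mk & _ & Ik & _ & _) C.
  pose proof (supp_comp_supp k e t C) as [It Nt].
  pose proof (C e ltac:(lra)) as [Ie _].
  assert (Ikt : inI (k t)) by auto.
  intros z Hz. destruct (classic (e <= z <= t \/ t <= z <= e)) as [Hin | Hout]; [apply C, Hin|].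
  assert (Iz : inI z) by (unfold inI in *; lra). split; [exact Iz|]. intros Ez.
  destruct (total_order_T z (k t)) as [[Hlt | ->] | Hgt].
  - pose proof (Mk t z It Iz ltac:(lra)). lra.
  - apply Nt. apply (increasing_I_inj k); auto.
  - pose proof (Mk z t Iz It ltac:(lra)). lra.
Qed.

Lemma supp_comp_app_inv k ki e t : incr_bij k ki -> supp_comp k e t -> supp_comp k e (ki t).
Proof.
  intros B C. rewrite <- (supp_comp_inv k ki e B) in *.
  exact (supp_comp_app ki k e t (incr_bij_sym k ki B) C).
Qed.

Lemma supp_comp_conj k f fi e z : incr_bij f fi -> maps_I k -> inI e -> f e = e -> inI z ->
  (supp_comp (conjg k f fi) e (f z) <-> supp_comp k e z).
Proof.
  intros (Mf & Mfi & If & Ifi & Inv) Ik Ie fe Iz. unfold conjg, mul.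
  assert (fie : fi e = e) by (rewrite <- fe at 1; apply Inv, Ie).
  pose proof (If z Iz) as Ifz.
  split; intros C y Hy.
  - assert (Iy : inI y) by (unfold inI in *; lra).
    assert (Hfy : e <= f y <= f z \/ f z <= f y <= e).
    { rewrite <- fe. destruct Hy as [[H1 H2] | [H1 H2]]; [left | right];
        split; apply increasing_I_le; auto. }
    destruct (C (f y) Hfy) as [_ N]. split; [exact Iy|]. intros E. apply N.
    rewrite (proj1 (Inv y Iy)), E. reflexivity.
  - assert (Iy : inI y) by (unfold inI in *; lra).
    assert (Hfiy : e <= fi y <= z \/ z <= fi y <= e).
    { rewrite <- fie, <- (proj1 (Inv z Iz)). destruct Hy as [[H1 H2] | [H1 H2]];
        [left | right]; split; apply increasing_I_le; auto. }
    destruct (C (fi y) Hfiy) as [_ N]. split; [exact Iy|]. intros E. apply N.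
    apply (increasing_I_inj f); auto. rewrite E. symmetry. apply Inv, Iy.
Qed.

Definition commutes_on (C : R -> Prop) (u k : R -> R) : Prop :=
  forall y, C y -> u (k y) = k (u y).

Lemma commutes_on_inv k ki e u : incr_bij k ki -> maps_I u ->
  commutes_on (supp_comp k e) u k -> commutes_on (supp_comp k e) u ki.
Proof.
  intros B Iu Hc y Cy. pose proof B as (_ & _ & _ & Iki & Inv).
  pose proof (supp_comp_inI k e y Cy) as Iy.
  pose proof (Hc (ki y) (supp_comp_app_inv k ki e y B Cy)) as E.
  rewrite (proj2 (Inv y Iy)) in E. rewrite E. symmetry. apply Inv. auto.
Qed.

Lemma iter_maps_I k n t : maps_I k -> inI t -> inI (Nat.iter n k t).
Proof. intros Ik It. exact (Nat.iter_invariant n R k inI Ik t It). Qed.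

Lemma iter_increasing k n s t : increasing_I k -> maps_I k -> inI s -> inI t -> s < t ->
  Nat.iter n k s < Nat.iter n k t.
Proof.
  intros Mk Ik Is It H. induction n as [|n IH]; simpl; auto.
  apply Mk; auto using iter_maps_I.
Qed.

Lemma iter_increasing_le k n s t : increasing_I k -> maps_I k -> inI s -> inI t -> s <= t ->
  Nat.iter n k s <= Nat.iter n k t.
Proof. intros Mk Ik Is It [H | ->]; [left; apply iter_increasing | right]; auto. Qed.

Lemma iter_cancel k ki m y : incr_bij k ki -> inI y -> Nat.iter m k (Nat.iter m ki y) = y.
Proof.
  intros (_ & _ & _ & Iki & Inv) Iy. revert y Iy.
  induction m as [|m IH]; intros y Iy; [reflexivity|].
  rewrite Nat.iter_succ_r, Nat.iter_succ, (proj2 (Inv _ (iter_maps_I ki m y Iki Iy))).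
  apply IH, Iy.
Qed.

Lemma Un_cv_inI u L : (forall n, inI (u n)) -> Un_cv u L -> inI L.
Proof.
  intros Iu Hcv. unfold inI. split; apply Rnot_lt_le; intros H;
    [destruct (Hcv (- L) ltac:(lra)) as [N HN] | destruct (Hcv (L - 1) ltac:(lra)) as [N HN]];
    specialize (HN N (le_n N)); specialize (Iu N); unfold Rdist, inI in *;
    apply Rabs_def2 in HN; lra.
Qed.

(* If, say, k L < L < ki L, then an orbit point in (k L, ki L) is mapped below k L
   in at most two steps, so the orbit cannot stay near L. *)
Lemma orbit_limit_fixed k ki u L : incr_bij k ki -> (forall n, inI (u n)) ->
  (forall n, u (S n) = k (u n)) -> Un_cv u L -> inI L -> k L = L.
Proof.
  intros (Mk & Mki & Ik & Iki & Inv) Iu Hu Hcv IL.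
  destruct (Inv L IL) as [kiL kkiL].
  assert (near : forall a b, a < L < b ->
            exists N, forall n, (n >= N)%nat -> a < u n < b).
  { intros a b Hab. destruct (Hcv (Rmin (L - a) (b - L)) ltac:(apply Rmin_glb_lt; lra)) as [N HN].
    exists N. intros n Hn. specialize (HN n Hn). unfold Rdist in HN. apply Rabs_def2 in HN.
    pose proof (Rmin_l (L - a) (b - L)). pose proof (Rmin_r (L - a) (b - L)). lra. }
  destruct (total_order_T (k L) L) as [[Hlt | Heq] | Hgt]; [exfalso | exact Heq | exfalso].
  - assert (HkiL : L < ki L) by (rewrite <- kiL at 1; apply Mki; auto).
    destruct (near (k L) (ki L) ltac:(lra)) as [N HN].
    pose proof (HN N (le_n N)) as HN0. pose proof (HN (S N) ltac:(lia)) as HN1.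
    pose proof (HN (S (S N)) ltac:(lia)) as HN2.
    destruct (Rle_lt_dec (u N) L) as [Hle | Hgt].
    + pose proof (increasing_I_le k (u N) L Mk (Iu N) IL Hle). rewrite <- Hu in *. lra.
    + assert (H1 : u (S N) < L) by (rewrite Hu, <- kkiL; apply Mk; auto; lra).
      pose proof (Mk (u (S N)) L (Iu (S N)) IL H1). rewrite <- Hu in *. lra.
  - assert (HkiL : ki L < L) by (rewrite <- kiL at 2; apply Mki; auto).
    destruct (near (ki L) (k L) ltac:(lra)) as [N HN].
    pose proof (HN N (le_n N)) as HN0. pose proof (HN (S N) ltac:(lia)) as HN1.
    pose proof (HN (S (S N)) ltac:(lia)) as HN2.
    destruct (Rle_lt_dec L (u N)) as [Hle | Hlt].
    + pose proof (increasing_I_le k L (u N) Mk IL (Iu N) Hle). rewrite <- Hu in *. lra.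
    + assert (H1 : L < u (S N)) by (rewrite Hu, <- kkiL; apply Mk; auto; lra).
      pose proof (Mk L (u (S N)) IL (Iu (S N)) H1). rewrite <- Hu in *. lra.
Qed.

Lemma increasing_orbit_limit k ki e : incr_bij k ki -> inI e -> e < k e ->
  exists L, inI L /\ k L = L /\ (forall n, Nat.iter n k e < L) /\
    Un_cv (fun n => Nat.iter n k e) L.
Proof.
  intros B Ie He. pose proof B as (Mk & _ & Ik & _ & _).
  set (u := fun n => Nat.iter n k e).
  assert (Iu : forall n, inI (u n)) by (intros n; apply iter_maps_I; auto).
  assert (Hinc : forall n, u n < u (S n)).
  { intros n. unfold u. rewrite Nat.iter_succ_r. apply iter_increasing; auto. }
  destruct (growing_cv u) as [L Hcv].
  - intros n. left. apply Hinc.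
  - exists 1. intros y [n ->]. exact (proj2 (Iu n)).
  - assert (IL : inI L) by exact (Un_cv_inI u L Iu Hcv).
    exists L. split; [exact IL | split; [| split; [| exact Hcv]]].
    + apply (orbit_limit_fixed k ki u); auto.
    + intros n. pose proof (growing_ineq u L (fun m => Rlt_le _ _ (Hinc m)) Hcv (S n)).
      specialize (Hinc n). unfold u in *. lra.
Qed.

Lemma decreasing_orbit_limit k ki e : incr_bij k ki -> inI e -> k e < e ->
  exists L, inI L /\ k L = L /\ (forall n, L < Nat.iter n k e) /\
    Un_cv (fun n => Nat.iter n k e) L.
Proof.
  intros B Ie He. pose proof B as (Mk & _ & Ik & _ & _).
  set (u := fun n => Nat.iter n k e).
  assert (Iu : forall n, inI (u n)) by (intros n; apply iter_maps_I; auto).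
  assert (Hdec : forall n, u (S n) < u n).
  { intros n. unfold u. rewrite Nat.iter_succ_r. apply iter_increasing; auto. }
  destruct (decreasing_cv u) as [L Hcv].
  - intros n. left. apply Hdec.
  - exists 0. intros y [n ->]. unfold opp_seq. pose proof (proj1 (Iu n)). lra.
  - assert (IL : inI L) by exact (Un_cv_inI u L Iu Hcv).
    exists L. split; [exact IL | split; [| split; [| exact Hcv]]].
    + apply (orbit_limit_fixed k ki u); auto.
    + intros n. pose proof (decreasing_ineq u L (fun m => Rlt_le _ _ (Hdec m)) Hcv (S n)).
      specialize (Hdec n). unfold u in *. lra.
Qed.

(* The backward orbit of e decreases to a fixed point, which lies below t. *)
Lemma iter_reaches_start k ki e t : incr_bij k ki -> inI e -> e < k e -> supp_comp k e t ->
  exists m, e <= Nat.iter m k t.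
Proof.
  intros B Ie He Ct. pose proof B as (Mk & Mki & Ik & Iki & Inv).
  pose proof (supp_comp_inI k e t Ct) as It.
  destruct (Rle_lt_dec e t) as [Het | Hte]; [exists O; exact Het|].
  assert (Hkie : ki e < e) by (rewrite <- (proj1 (Inv e Ie)) at 2; apply Mki; auto).
  destruct (decreasing_orbit_limit ki k e (incr_bij_sym k ki B) Ie Hkie)
    as (L & IL & kiL & above & Hcv).
  assert (kL : k L = L) by (rewrite <- kiL at 1; apply Inv, IL).
  assert (HLt : L < t).
  { apply Rnot_le_lt. intros HtL. pose proof (above O) as HLe. simpl in HLe.
    destruct (Ct L ltac:(lra)) as [_ N]. exact (N kL). }
  destruct (Hcv (t - L) ltac:(lra)) as [m Hm]. specialize (Hm m (le_n m)).
  unfold Rdist in Hm. apply Rabs_def2 in Hm.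
  exists m. rewrite <- (iter_cancel k ki m e B Ie).
  apply iter_increasing_le; auto using iter_maps_I. lra.
Qed.

Definition right_end (C : R -> Prop) (e L : R) : Prop :=
  e < L /\ L <= 1 /\ (forall t, C t -> t < L) /\ (forall t, e <= t < L -> C t).

Lemma right_end_unique C e L1 L2 : right_end C e L1 -> right_end C e L2 -> L1 = L2.
Proof.
  intros (e1 & _ & out1 & in1) (e2 & _ & out2 & in2).
  destruct (total_order_T L1 L2) as [[H | H] | H]; auto.
  - pose proof (out1 L1 (in2 L1 ltac:(lra))). lra.
  - pose proof (out2 L2 (in1 L2 ltac:(lra))). lra.
Qed.

Lemma forward_attracted k ki e : incr_bij k ki -> inI e -> e < k e ->
  exists L, right_end (supp_comp k e) e L /\
    forall P : R -> Prop, (forall y, supp_comp k e y -> P y -> P (k y)) ->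
    forall t d, supp_comp k e t -> P t -> 0 < d ->
    exists t', supp_comp k e t' /\ P t' /\ L - d < t'.
Proof.
  intros B Ie He. pose proof B as (Mk & _ & Ik & _ & _).
  destruct (increasing_orbit_limit k ki e B Ie He) as (L & IL & kL & below & Hcv).
  assert (Ce : supp_comp k e e) by (apply supp_comp_refl; split; [exact Ie | lra]).
  assert (Corbit : forall n, supp_comp k e (Nat.iter n k e)).
  { intros n. apply (Nat.iter_invariant n R k (supp_comp k e)); [|exact Ce].
    intros y. exact (supp_comp_app k ki e y B). }
  assert (approx : forall d, 0 < d -> exists n, L - d < Nat.iter n k e).
  { intros d Hd. destruct (Hcv d Hd) as [N HN]. exists N. specialize (HN N (le_n N)).
    unfold Rdist in HN. apply Rabs_def2 in HN. lra. }
  exists L. split; [split; [exact (below O) | split; [exact (proj2 IL) | split]]|].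
  - intros t Ct. apply Rnot_le_lt. intros HLt. pose proof (below O) as HeL. simpl in HeL.
    destruct (Ct L ltac:(lra)) as [_ N]. exact (N kL).
  - intros t Ht. destruct (approx (L - t) ltac:(lra)) as [n Hn].
    apply (supp_comp_between k e (Nat.iter n k e)); [exact (Corbit n) | lra].
  - intros P HP t d Ct Pt Hd.
    destruct (iter_reaches_start k ki e t B Ie He Ct) as [m Hm].
    destruct (approx d Hd) as [n Hn].
    destruct (Nat.iter_invariant (n + m) R k (fun y => supp_comp k e y /\ P y)
                (fun y CPy => conj (supp_comp_app k ki e y B (proj1 CPy))
                                   (HP y (proj1 CPy) (proj2 CPy)))
                t (conj Ct Pt)) as [Cw Pw].
    exists (Nat.iter (n + m) k t). split; [exact Cw | split; [exact Pw|]].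
    rewrite Nat.iter_add.
    pose proof (iter_increasing_le k n e (Nat.iter m k t) Mk Ik Ie
                  (iter_maps_I k m t Ik (supp_comp_inI k e t Ct)) Hm).
    lra.
Qed.

Lemma supp_comp_attracted k ki e : incr_bij k ki -> Supp k e ->
  exists L, right_end (supp_comp k e) e L /\
    forall P : R -> Prop, (forall y, supp_comp k e y -> P y -> P (k y) /\ P (ki y)) ->
    forall t d, supp_comp k e t -> P t -> 0 < d ->
    exists t', supp_comp k e t' /\ P t' /\ L - d < t'.
Proof.
  intros B [Ie Ne]. pose proof B as (_ & Mki & Ik & _ & Inv).
  destruct (Rlt_or_le e (k e)) as [Hup | Hdown].
  - destruct (forward_attracted k ki e B Ie Hup) as (L & RE & Hattr).
    exists L. split; [exact RE|]. intros P HP. apply Hattr.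
    intros y Cy Py. exact (proj1 (HP y Cy Py)).
  - assert (Hup : e < ki e) by (rewrite <- (proj1 (Inv e Ie)) at 1; apply Mki; auto; lra).
    destruct (forward_attracted ki k e (incr_bij_sym k ki B) Ie Hup) as (L & RE & Hattr).
    rewrite (supp_comp_inv k ki e B) in RE, Hattr.
    exists L. split; [exact RE|]. intros P HP. apply Hattr.
    intros y Cy Py. exact (proj2 (HP y Cy Py)).
Qed.

(* A point where u and v differ would be carried arbitrarily close to L by powers of k. *)
Lemma commuting_agree k ki e L u v : incr_bij k ki -> Supp k e ->
  right_end (supp_comp k e) e L -> maps_I u -> maps_I v ->
  commutes_on (supp_comp k e) u k -> commutes_on (supp_comp k e) v k ->
  forall d, 0 < d -> (forall t, L - d < t < L -> u t = v t) ->
  forall t, supp_comp k e t -> u t = v t.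
Proof.
  intros B Se RE Iu Iv Cu Cv d Hd Hnear t Ct.
  pose proof B as (Mk & Mki & Ik & Iki & _).
  destruct (supp_comp_attracted k ki e B Se) as (L' & RE' & Hattr).
  rewrite <- (right_end_unique _ _ _ _ RE RE') in Hattr.
  apply NNPP. intros Nt.
  assert (Hdiff : forall y, supp_comp k e y -> u y <> v y ->
                    u (k y) <> v (k y) /\ u (ki y) <> v (ki y)).
  { intros y Cy N. pose proof (supp_comp_inI k e y Cy) as Iy. split; intros E; apply N.
    - rewrite (Cu y Cy), (Cv y Cy) in E. apply (increasing_I_inj k); auto.
    - rewrite (commutes_on_inv k ki e u B Iu Cu y Cy),
              (commutes_on_inv k ki e v B Iv Cv y Cy) in E.
      apply (increasing_I_inj ki); auto. }
  destruct (Hattr (fun y => u y <> v y) Hdiff t d Ct Nt Hd) as (t' & Ct' & N' & Ht').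
  apply N', Hnear. split; [exact Ht'|]. destruct RE as (_ & _ & out & _). apply out, Ct'.
Qed.

(* The fixed points of g accumulate at the right end L, where g is affine. *)
Lemma commuting_fixpoint_id k ki e g : incr_bij k ki -> Supp k e -> left_affine g -> maps_I g ->
  commutes_on (supp_comp k e) g k ->
  forall w, supp_comp k e w -> g w = w -> forall t, supp_comp k e t -> g t = t.
Proof.
  intros B Se Ag Ig Cg w Cw gw.
  destruct (supp_comp_attracted k ki e B Se) as (L & RE & Hattr).
  pose proof RE as (eL & L1 & out & _). pose proof (proj1 Se) as Ie.
  destruct (Ag L ltac:(unfold inI in Ie; lra)) as (d & m & c & Hd & E).
  assert (Hfix : forall y, supp_comp k e y -> g y = y -> g (k y) = k y /\ g (ki y) = ki y).
  { intros y Cy gy.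
    rewrite (Cg y Cy), (commutes_on_inv k ki e g B Ig Cg y Cy), gy. split; reflexivity. }
  destruct (Hattr (fun y => g y = y) Hfix w d Cw gw ltac:(lra)) as (t1 & C1 & g1 & H1).
  pose proof (out t1 C1) as H1L.
  destruct (Hattr (fun y => g y = y) Hfix t1 (L - t1) C1 g1 ltac:(lra)) as (t2 & C2 & g2 & H2).
  pose proof (out t2 C2) as H2L.
  rewrite E in g1, g2 by lra.
  assert (Hm : m = 1) by (apply (Rmult_eq_reg_r (t2 - t1)); lra).
  subst m. assert (Hc : c = 0) by lra. subst c.
  apply (commuting_agree k ki e L g (fun t => t) B Se RE Ig (fun t It => It) Cg
           (fun y _ => eq_refl) d (proj1 Hd)).
  intros t Ht. rewrite E by lra. ring.
Qed.

Lemma supp_comp_sub_of_commute k ki g e : incr_bij k ki -> Supp k e -> Supp g e ->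
  left_affine g -> maps_I g -> (forall t, inI t -> g (k t) = k (g t)) ->
  forall t, supp_comp k e t -> supp_comp g e t.
Proof.
  intros B Sk [_ Ng] Ag Ig Hc. apply supp_comp_sub. intros w Cw gw. apply Ng.
  apply (commuting_fixpoint_id k ki e g B Sk Ag Ig) with (w := w); auto.
  - intros y Cy. apply Hc, (supp_comp_inI k e y Cy).
  - apply supp_comp_refl, Sk.
Qed.

Lemma supp_comp_eq_of_commute k ki g gi e : incr_bij k ki -> incr_bij g gi ->
  left_affine k -> left_affine g -> Supp k e -> Supp g e ->
  (forall t, inI t -> g (k t) = k (g t)) -> supp_comp k e = supp_comp g e.
Proof.
  intros Bk Bg Ak Ag Sk Sg Hc.
  pose proof Bk as (_ & _ & Ik & _). pose proof Bg as (_ & _ & Ig & _).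
  apply functional_extensionality. intros t. apply propositional_extensionality. split.
  - apply (supp_comp_sub_of_commute k ki g e); auto.
  - apply (supp_comp_sub_of_commute g gi k e); auto. intros s Is. symmetry. apply Hc, Is.
Qed.

Lemma right_end_fixed k e L : inI e -> right_end (supp_comp k e) e L -> k L = L.
Proof.
  intros Ie (eL & L1 & out & inn). apply NNPP. intros N.
  assert (CL : supp_comp k e L).
  { intros z Hz. destruct (Req_dec z L) as [-> | Hz'].
    - split; [unfold inI in *; lra | exact N].
    - apply (supp_comp_supp k e z), inn. lra. }
  pose proof (out L CL). lra.
Qed.

Lemma right_end_fixed_of_invariant (C : R -> Prop) e L f fi : incr_bij f fi -> inI e ->
  right_end C e L -> (forall z, C z -> C (f z)) -> (forall z, C z -> C (fi z)) -> f L = L.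
Proof.
  intros B Ie (eL & L1 & out & inn) Cf Cfi.
  assert (IL : inI L) by (unfold inI in *; lra).
  assert (not_below : forall f fi, incr_bij f fi -> (forall z, C z -> C (fi z)) -> ~ f L < L).
  { intros f' fi' (_ & Mfi & If & _ & Inv) Cfi' Hlt.
    set (t := (Rmax e (f' L) + L) / 2).
    pose proof (Rmax_l e (f' L)). pose proof (Rmax_r e (f' L)).
    pose proof (Rmax_lub_lt e (f' L) L eL Hlt).
    assert (It : inI t) by (unfold t, inI in *; lra).
    pose proof (out _ (Cfi' t (inn t ltac:(unfold t; lra)))) as Hfit.
    pose proof (Mfi (f' L) t (If L IL) It ltac:(unfold t; lra)) as Hmono.
    rewrite (proj1 (Inv L IL)) in Hmono. lra. }
  pose proof B as (_ & Mfi & If & _ & Inv).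
  destruct (total_order_T (f L) L) as [[Hlt | Heq] | Hgt]; [exfalso | exact Heq | exfalso].
  - exact (not_below f fi B Cfi Hlt).
  - apply (not_below fi f (incr_bij_sym f fi B) Cf).
    rewrite <- (proj1 (Inv L IL)) at 2. apply Mfi; auto.
Qed.

Section Conjugates.

Variables f0 g0 f1 g1 : R -> R.
Hypotheses (B0 : incr_bij f0 g0) (B1 : incr_bij f1 g1).
Hypotheses (A0 : left_affine f0) (Ag0 : left_affine g0) (A1 : left_affine f1).
Hypothesis Ag1 : left_affine g1.

Let h := mul f0 g1.
Let c1 := conjg f1 f0 g0.
Let c2 := conjg c1 f0 g0.

Hypothesis h_c1 : forall t, inI t -> h (c1 t) = c1 (h t).
Hypothesis h_c2 : forall t, inI t -> h (c2 t) = c2 (h t).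

Lemma conjugates_incr_bij : incr_bij h (mul f1 g0) /\ incr_bij c1 (conjg g1 f0 g0) /\
  incr_bij c2 (conjg (conjg g1 f0 g0) f0 g0).
Proof.
  pose proof (incr_bij_conj _ _ _ _ B1 B0) as Bc1.
  split; [exact (incr_bij_mul _ _ _ _ B0 (incr_bij_sym _ _ B1)) | split; [exact Bc1|]].
  exact (incr_bij_conj _ _ _ _ Bc1 B0).
Qed.

Lemma conjugates_left_affine : left_affine h /\ left_affine c1 /\ left_affine c2.
Proof.
  pose proof (incr_bij_sym _ _ B0) as Bg0.
  assert (Ac1 : left_affine c1).
  { apply (left_affine_mul _ (mul g1 f0)); [exact (incr_bij_mul _ _ _ _ Bg0 B1) | | exact A0].
    exact (left_affine_mul _ _ _ Bg0 Ag0 A1). }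
  split; [exact (left_affine_mul _ _ _ B0 A0 Ag1) | split; [exact Ac1|]].
  destruct conjugates_incr_bij as (_ & Bc1 & _).
  apply (left_affine_mul _ (mul (conjg g1 f0 g0) f0));
    [exact (incr_bij_mul _ _ _ _ Bg0 Bc1) | | exact A0].
  exact (left_affine_mul _ _ _ Bg0 Ag0 Ac1).
Qed.

(* At a common fixed point of f0 and f1 all maps are affine to the left, and
   conjugating by f0 does not change the slope. *)
Lemma c1_c2_same_germ L : 0 < L <= 1 -> f0 L = L -> f1 L = L ->
  exists d, 0 < d /\ forall t, L - d < t < L -> c1 t = c2 t.
Proof.
  intros HL f0L f1L. pose proof B0 as (M0 & Mg0 & _ & _ & Inv0). pose proof B1 as (M1 & _).
  assert (g0L : g0 L = L) by (rewrite <- f0L at 1; apply Inv0; unfold inI; lra).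
  destruct (fixed_germ_of_left_affine f0 L M0 A0 HL f0L) as (s0 & Hs0 & G0).
  destruct (fixed_germ_of_left_affine g0 L Mg0 Ag0 HL g0L) as (sg & Hsg & Gg).
  destruct (fixed_germ_of_left_affine f1 L M1 A1 HL f1L) as (s1 & Hs1 & G1).
  assert (Hinv : sg * s0 = 1).
  { apply (fixed_germ_slope_unique (fun t => t) L).
    - apply (fixed_germ_ext_I (mul g0 f0) _ L _ HL); [intros t It; apply Inv0, It|].
      exact (fixed_germ_mul _ _ _ _ _ Hsg Gg G0).
    - exists 1. split; [lra|]. intros t _. ring. }
  assert (Gc1 : fixed_germ c1 L (sg * s1 * s0)).
  { apply fixed_germ_mul; [repeat apply Rmult_lt_0_compat; assumption
                          | apply fixed_germ_mul; assumption | exact G0]. }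
  assert (Gc2 : fixed_germ c2 L (sg * (sg * s1 * s0) * s0)).
  { apply fixed_germ_mul; [repeat apply Rmult_lt_0_compat; assumption
                          | apply fixed_germ_mul; assumption | exact G0]. }
  replace (sg * s1 * s0) with ((sg * s0) * s1) in Gc1, Gc2 by ring.
  rewrite Hinv in Gc1, Gc2.
  replace (sg * (1 * s1) * s0) with ((sg * s0) * s1) in Gc2 by ring.
  rewrite Hinv in Gc2.
  exact (fixed_germ_agree c1 c2 L _ Gc1 Gc2).
Qed.

Variable e : R.
Hypotheses (Ie : inI e) (f0e : f0 e = e) (Sf1e : Supp f1 e).

Lemma conjugates_Supp_at_e : Supp h e /\ Supp c1 e /\ Supp c2 e.
Proof.
  pose proof B1 as (_ & _ & I1 & _). destruct conjugates_incr_bij as (_ & (_ & _ & Ic1 & _) & _).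
  assert (Sc1 : Supp c1 e).
  { apply (supp_comp_supp c1 e e). rewrite <- f0e at 2.
    apply (supp_comp_conj f1 f0 g0 e e B0 I1 Ie f0e Ie), supp_comp_refl, Sf1e. }
  split; [|split; [exact Sc1|]].
  - pose proof Sf1e as Sg1e. rewrite <- (Supp_inv f1 g1 B1) in Sg1e. destruct Sg1e as [_ N].
    split; [exact Ie|]. unfold h, mul. rewrite f0e. exact N.
  - apply (supp_comp_supp c2 e e). rewrite <- f0e at 2.
    apply (supp_comp_conj c1 f0 g0 e e B0 Ic1 Ie f0e Ie), supp_comp_refl, Sc1.
Qed.

Lemma supp_comp_f1_eq : supp_comp f1 e = supp_comp h e /\ supp_comp f1 e = supp_comp c1 e.
Proof.
  destruct conjugates_incr_bij as (Bh & Bc1 & Bc2).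
  destruct conjugates_left_affine as (Ah & Ac1 & Ac2).
  destruct conjugates_Supp_at_e as (Sh & Sc1 & Sc2).
  pose proof B1 as (_ & _ & I1 & _). pose proof Bc1 as (_ & _ & Ic1 & _).
  assert (Ehc1 : supp_comp h e = supp_comp c1 e)
    by exact (supp_comp_eq_of_commute _ _ _ _ e Bh Bc1 Ah Ac1 Sh Sc1
                (fun t It => eq_sym (h_c1 t It))).
  assert (Ehc2 : supp_comp h e = supp_comp c2 e)
    by exact (supp_comp_eq_of_commute _ _ _ _ e Bh Bc2 Ah Ac2 Sh Sc2
                (fun t It => eq_sym (h_c2 t It))).
  assert (Ef1c1 : forall z, inI z -> (supp_comp f1 e z <-> supp_comp c1 e z)).
  { intros z Iz.
    pose proof (supp_comp_conj f1 f0 g0 e z B0 I1 Ie f0e Iz) as Hf1.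
    pose proof (supp_comp_conj c1 f0 g0 e z B0 Ic1 Ie f0e Iz) as Hc1.
    change (conjg f1 f0 g0) with c1 in Hf1. change (conjg c1 f0 g0) with c2 in Hc1.
    rewrite <- Ehc2, Ehc1 in Hc1. tauto. }
  assert (Ef1c1' : supp_comp f1 e = supp_comp c1 e).
  { apply functional_extensionality. intros z. apply propositional_extensionality.
    split; intros C; apply (Ef1c1 z (supp_comp_inI _ _ _ C)), C. }
  split; [rewrite Ef1c1', Ehc1; reflexivity | exact Ef1c1'].
Qed.

Lemma supp_comp_f1_invariant z : supp_comp f1 e z ->
  supp_comp f1 e (f0 z) /\ supp_comp f1 e (g0 z).
Proof.
  intros Cz. destruct supp_comp_f1_eq as [_ Ef1c1].
  pose proof B0 as (_ & _ & _ & Ig0 & Inv0). pose proof B1 as (_ & _ & I1 & _).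
  pose proof (supp_comp_inI _ _ _ Cz) as Iz. split.
  - rewrite Ef1c1. apply (supp_comp_conj f1 f0 g0 e z B0 I1 Ie f0e Iz), Cz.
  - pose proof (supp_comp_conj f1 f0 g0 e (g0 z) B0 I1 Ie f0e (Ig0 z Iz)) as H.
    rewrite (proj2 (Inv0 z Iz)) in H. change (conjg f1 f0 g0) with c1 in H.
    rewrite <- Ef1c1 in H. apply H, Cz.
Qed.

(* c1 and c2 have the same germ at the right end of the common component and both
   commute with h, so they agree on it; thus g0 commutes with c1 there and fixes e. *)
Lemma f0_fixes_supp_comp_f1 x : supp_comp f1 e x -> f0 x = x.
Proof.
  destruct supp_comp_f1_eq as [Ef1h Ef1c1]. destruct conjugates_incr_bij as (Bh & Bc1 & Bc2).
  destruct conjugates_Supp_at_e as (Sh & Sc1 & _).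
  pose proof B0 as (_ & _ & _ & Ig0 & Inv0).
  pose proof Bc1 as (_ & _ & Ic1 & _). pose proof Bc2 as (_ & _ & Ic2 & _).
  destruct (supp_comp_attracted f1 g1 e B1 Sf1e) as (L & RE & _).
  assert (f0L : f0 L = L).
  { apply (right_end_fixed_of_invariant _ e L f0 g0 B0 Ie RE);
      intros z Cz; apply (supp_comp_f1_invariant z Cz). }
  pose proof RE as (eL & L1 & _).
  destruct (c1_c2_same_germ L ltac:(unfold inI in Ie; lra) f0L (right_end_fixed f1 e L Ie RE))
    as (d & Hd & Hnear).
  assert (Ec : forall y, supp_comp c1 e y -> c1 y = c2 y).
  { rewrite <- Ef1c1, Ef1h. rewrite Ef1h in RE.
    exact (commuting_agree h _ e L c1 c2 Bh Sh RE Ic1 Ic2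
             (fun y Cy => eq_sym (h_c1 y (supp_comp_inI _ _ _ Cy)))
             (fun y Cy => eq_sym (h_c2 y (supp_comp_inI _ _ _ Cy))) d Hd Hnear). }
  assert (Hg0 : commutes_on (supp_comp c1 e) g0 c1).
  { intros y Cy. pose proof (supp_comp_inI _ _ _ Cy) as Iy. rewrite (Ec y Cy).
    change (g0 (f0 (c1 (g0 y))) = c1 (g0 y)). apply Inv0. auto. }
  assert (g0e : g0 e = e) by (rewrite <- f0e at 1; apply Inv0, Ie).
  intros Cx. rewrite Ef1c1 in Cx.
  pose proof (commuting_fixpoint_id c1 _ e g0 Bc1 Sc1 Ag0 Ig0 Hg0 e (supp_comp_refl _ _ Sc1)
                g0e x Cx) as g0x.
  rewrite <- g0x at 1. apply Inv0, (supp_comp_inI _ _ _ Cx).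
Qed.

End Conjugates.

Theorem lemma2p4 (f0 f1 g0 g1 : R -> R) :
  PL0 f0 -> PL0 f1 -> is_inv f0 g0 -> is_inv f1 g1 ->
  (* [f1^{f0}, f0 f1^{-1}] = 1 *)
  is_id (comm (conjg f1 f0 g0) (conjg g1 f0 g0) (mul f0 g1) (mul f1 g0)) ->
  (* [f0 f1^{-1}, f1^{f0^2}] = 1 *)
  is_id (comm (mul f0 g1) (mul f1 g0)
              (conjg f1 (mul f0 f0) (mul g0 g0))
              (conjg g1 (mul f0 f0) (mul g0 g0))) ->
  forall A : R -> Prop, orbital f0 A ->
    (exists B : R -> Prop, orbital f1 B /\ forall x, B x -> A x) \/
    (forall x, A x -> ~ Supp f1 x).
Proof.
  intros P0 P1 Iv0 Iv1 H1 H2 A OA.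
  pose proof (PL0_incr_bij f0 g0 P0 Iv0) as B0. pose proof (PL0_incr_bij f1 g1 P1 Iv1) as B1.
  pose proof (incr_bij_mul _ _ _ _ B0 (incr_bij_sym _ _ B1)) as Bh.
  pose proof (commute_of_comm_id _ _ _ _ (incr_bij_conj _ _ _ _ B1 B0) Bh H1) as h_c1.
  pose proof (commute_of_comm_id _ _ _ _ Bh
                (incr_bij_conj _ _ _ _ B1 (incr_bij_mul _ _ _ _ B0 B0)) H2) as c2_h.
  destruct (classic (exists x, A x /\ Supp f1 x)) as [(x & Ax & Sx) | Hno].
  - left. exists (supp_comp f1 x). split; [exact (supp_comp_orbital f1 x Sx)|].
    intros y Cy. apply NNPP. intros Ny.
    destruct (orbital_exit_fixed f0 A x y OA Ax (supp_comp_inI f1 x y Cy) Ny)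
      as (z & Hz & Iz & f0z).
    pose proof (supp_comp_between f1 x y z Cy Hz) as Cz.
    destruct OA as (_ & SA & _). apply (proj2 (SA x Ax)).
    apply (f0_fixes_supp_comp_f1 f0 g0 f1 g1 B0 B1 (PL0_left_affine f0 P0)
             (PL0_left_affine g0 (proj1 Iv0)) (PL0_left_affine f1 P1)
             (PL0_left_affine g1 (proj1 Iv1)) h_c1 (fun t It => eq_sym (c2_h t It))
             z Iz f0z (supp_comp_supp f1 x z Cz)).
    exact (supp_comp_sym f1 x z Cz).
  - right. intros x Ax Sx. apply Hno. exists x. split; assumption.
Qed.
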